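(* Let $-1<g<1$ and $x,y\in[-1,1]$. Let $L_\ell$ denote the $\ell$-th Legendre polynomial and define $$H(x,y;g)=\sum_{\ell=0}^\infty \frac{2\ell+1}{2}\,g^\ell L_\ell(x)L_\ell(y).$$ Set $$w_\pm = 1+g^2-2g\left(xy \mp \sqrt{1-x^2}\sqrt{1-y^2}\right).$$ Then $w_+>0$, $w_->0$, and $$H(x,y;g)=\frac{1-g^2}{\pi\, w_-\sqrt{w_+}}\;E_0\!\left(\frac{4g\sqrt{1-x^2}\sqrt{1-y^2}}{w_+}\right),$$ where $E_0$ is the complete elliptic integral of the second kind (in the convention below). Equivalently, writing $x=\cos\theta$, $y=\cos\mu$ with $\theta,\mu\in[0,\pi]$ and $u_\pm=1+g^2-2g\cos(\theta\pm\mu)$, $$H(\cos\theta,\cos\mu;g)=\frac{1-g^2}{\pi\,u_-\sqrt{u_+}}\,E_0\!\left(\frac{u_+-u_-}{u_+}\right).$$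
   Context: Here $E_0$ is defined in terms of the modulus $m$ (not the parameter $k$ with $m=k^2$): $$E_0(m)=\int_0^{\pi/2}\sqrt{1-m\sin^2 s}\,ds \qquad (m<1).$$ The arguments appearing in the formulas are real and less than $1$. The series defining $H$ is the Henyey–Greenstein scattering kernel $P_0$, i.e. the azimuthal average of the Henyey–Greenstein phase function $$p_{HG}(t,g)=\tfrac12(1-g^2)(1+g^2-2gt)^{-3/2}.$$ *)

From Stdlib Require Import Reals.
From Coquelicot Require Import Coquelicot.
Open Scope R_scope.

(* Legendre polynomials via Bonnet's recurrence:
   L_0 = 1, L_1 = x, (n+2) L_{n+2} = (2n+3) x L_{n+1} - (n+1) L_n. *)
Fixpoint legendre_pair (n : nat) (x : R) : R * R :=
  match n with
  | O => (1, x)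
  | S k => let (a, b) := legendre_pair k x in
           (b, ((2 * INR k + 3) * x * b - (INR k + 1) * a) / (INR k + 2))
  end.

Definition legendre (n : nat) (x : R) : R := fst (legendre_pair n x).

Definition E0 (m : R) : R :=
  RInt (fun s => sqrt (1 - m * sin s ^ 2)) 0 (PI / 2).

Definition H_term (g x y : R) (l : nat) : R :=
  (2 * INR l + 1) / 2 * g ^ l * legendre l x * legendre l y.

(* The Legendre expansion of the Henyey-Greenstein phase function follows from the
   generating function [sum_l P_l(t) g^l = (1 - 2 g t + g^2)^(-1/2)], obtained by
   solving the first-order equation it satisfies as a power series in [g]:
   [sum_l (2l+1)/2 g^l P_l(t) = p_HG(t, g)].  Laplace's addition theorem
   [int_0^PI P_l(cos th cos mu + sin th sin mu cos ph) dph = PI P_l(cos th) P_l(cos mu)]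
   turns every term of [H] into an azimuthal average, so termwise integration
   (dominated by [(2l+1)/2 |g|^l], as [|P_l| <= 1]) gives
   [H = 1/PI int_0^PI p_HG(cos gamma(ph), g) dph].  Writing the denominator as
   [A - B cos ph], the substitution [ph = PI - 2 s] reduces this to
   [int_0^(PI/2) (1 - m sin^2 s)^(-3/2) ds = E0(m) / (1 - m)] with
   [m = 2B / (A + B) = (u+ - u-) / u+].
   The addition theorem is proved by uniqueness for the [th]-form of Legendre's
   equation: both sides solve it with the same values and derivatives at [th = 0] and
   [th = PI], and the energy [h^2 + h'^2 / (l (l+1))] of the difference decreases on
   [0, PI/2] and increases on [PI/2, PI], hence vanishes. *)

From Stdlib Require Import Reals Lra Lia.
From Coquelicot Require Import Coquelicot.
Open Scope R_scope.

Lemma INR_plus_2_neq_0 n : INR n + 2 <> 0.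
Proof. pose proof (pos_INR n); lra. Qed.

Lemma INR_mul_succ_pos n : (0 < n)%nat -> 0 < INR n * (INR n + 1).
Proof. intros Hn. apply lt_0_INR in Hn. nra. Qed.

Lemma sin_cos_sq x : sin x ^ 2 + cos x ^ 2 = 1.
Proof. rewrite <- (sin2_cos2 x). unfold Rsqr. ring. Qed.

Lemma is_derive_unique_eta (f : R -> R) x l :
  is_derive f x l -> Derive (fun y => f y) x = l.
Proof. apply is_derive_unique. Qed.

Lemma MVT_closed (f df : R -> R) a b : a <= b ->
  (forall x, a <= x <= b -> is_derive f x (df x)) ->
  exists c, a <= c <= b /\ f b - f a = df c * (b - a).
Proof.
  intros Hab Hd.
  destruct (MVT_gen f a b df) as [c [Hc Hmvt]];
    rewrite ?Rmin_left, ?Rmax_right in * by lra.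
  - intros x Hx; apply Hd; lra.
  - intros x Hx. apply continuity_pt_filterlim, (ex_derive_continuous (V := R_NormedModule)).
    eexists; apply Hd, Hx.
  - exists c; split; assumption.
Qed.

Lemma is_derive_nonneg_le (f df : R -> R) a b : a <= b ->
  (forall x, a <= x <= b -> is_derive f x (df x)) ->
  (forall x, a <= x <= b -> 0 <= df x) -> f a <= f b.
Proof.
  intros Hab Hd Hpos. destruct (MVT_closed f df a b Hab Hd) as [c [Hc Hmvt]].
  pose proof (Hpos c Hc). nra.
Qed.

Lemma is_derive_nonpos_ge (f df : R -> R) a b : a <= b ->
  (forall x, a <= x <= b -> is_derive f x (df x)) ->
  (forall x, a <= x <= b -> df x <= 0) -> f b <= f a.
Proof.
  intros Hab Hd Hneg. destruct (MVT_closed f df a b Hab Hd) as [c [Hc Hmvt]].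
  pose proof (Hneg c Hc). nra.
Qed.

Lemma is_derive_0_eq (f : R -> R) a b :
  (forall x, Rmin a b <= x <= Rmax a b -> is_derive f x 0) -> f a = f b.
Proof.
  intros Hd.
  destruct (MVT_gen f a b (fun _ => 0)) as [c [_ Hmvt]]; [| |lra].
  - intros x Hx; apply Hd; lra.
  - intros x Hx. apply continuity_pt_filterlim, (ex_derive_continuous (V := R_NormedModule)).
    eexists; apply Hd, Hx.
Qed.

Lemma is_RInt_unique_R (f : R -> R) a b l1 l2 :
  is_RInt f a b l1 -> is_RInt f a b l2 -> l1 = l2.
Proof.
  intros H1 H2. rewrite <- (is_RInt_unique _ _ _ _ H1). exact (is_RInt_unique _ _ _ _ H2).
Qed.

Lemma continuous_inv_mul_sqrt (q : R -> R) x : continuous q x -> 0 < q x ->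
  continuous (fun y => 1 / (q y * sqrt (q y))) x.
Proof.
  intros Hq Hpos.
  apply (continuous_comp q (fun z => 1 / (z * sqrt z))); [exact Hq|].
  assert (0 < sqrt (q x)) by (apply sqrt_lt_R0, Hpos).
  apply (ex_derive_continuous (V := R_NormedModule)).
  auto_derive. repeat split; try lra. apply Rgt_not_eq, Rmult_lt_0_compat; lra.
Qed.

Lemma continuity_2d_pt_continuous_r (f : R -> R -> R) x y :
  continuity_2d_pt f x y -> continuous (f x) y.
Proof.
  intros H. apply filterlim_locally. intros eps.
  destruct (H eps) as [d Hd]. exists d. intros v Hv.
  apply Hd; [rewrite Rminus_diag, Rabs_R0; apply cond_pos|exact Hv].
Qed.

Lemma continuity_2d_pt_comp_continuous (f : R -> R) (g : R -> R -> R) x y :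
  (forall z, continuous f z) -> continuity_2d_pt g x y ->
  continuity_2d_pt (fun u v => f (g u v)) x y.
Proof.
  intros Hf Hg. apply continuity_1d_2d_pt_comp; [|exact Hg].
  apply continuity_pt_filterlim, Hf.
Qed.

Lemma ex_RInt_continuity_2d_pt (f : R -> R -> R) u a b :
  (forall x y, continuity_2d_pt f x y) -> ex_RInt (f u) a b.
Proof.
  intros H. apply (ex_RInt_continuous (V := R_CompleteNormedModule)).
  intros z _. apply continuity_2d_pt_continuous_r, H.
Qed.

Lemma is_derive_RInt_continuity_2d (f df : R -> R -> R) a b u :
  (forall u v, is_derive (fun w => f w v) u (df u v)) ->
  (forall u v, continuity_2d_pt df u v) ->
  (forall u v, continuity_2d_pt f u v) ->
  is_derive (fun w => RInt (f w) a b) u (RInt (df u) a b).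
Proof.
  intros Hd Hdc Hc.
  assert (HD : forall u v, Derive (fun w => f w v) u = df u v)
    by (intros; apply is_derive_unique, Hd).
  rewrite <- (RInt_ext (fun t => Derive (fun w => f w t) u)) by (intros; apply HD).
  apply (is_derive_RInt_param f a b u).
  - apply filter_forall. intros x t _. eexists. apply Hd.
  - intros t _. eapply continuity_2d_pt_ext; [|apply (Hdc u t)].
    intros; symmetry; apply HD.
  - apply filter_forall. intros x. apply ex_RInt_continuity_2d_pt, Hc.
Qed.

Lemma RInt_0_PI_cos_scal K : RInt (fun v => K * cos v) 0 PI = 0.
Proof.
  apply (is_RInt_unique (V := R_CompleteNormedModule)).
  assert (H : is_RInt (fun v => K * cos v) 0 PI (minus (K * sin PI) (K * sin 0))).
  { apply (is_RInt_derive (V := R_CompleteNormedModule) (fun v => K * sin v)).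
    - intros; auto_derive; auto; ring.
    - intros; apply (continuous_scal_r (V := R_NormedModule) K cos).
      apply continuity_pt_filterlim, continuity_cos. }
  rewrite sin_PI, sin_0 in H. unfold minus, plus, opp in H; simpl in H.
  replace (K * 0 + - (K * 0)) with 0 in H by ring. exact H.
Qed.

Lemma RInt_0_PI_const K : RInt (fun _ => K) 0 PI = PI * K.
Proof. rewrite RInt_const. unfold scal; simpl; unfold mult; simpl. ring. Qed.

Lemma is_series_iff_sum_f_R0 (a : nat -> R) (l : R) :
  is_series a l <-> is_lim_seq (fun N => sum_f_R0 a N) l.
Proof.
  split; intro H.
  - apply (is_lim_seq_ext (sum_n a)); [intro; apply sum_n_Reals|exact H].
  - enough (Hs : is_lim_seq (sum_n a) l) by exact Hs.
    apply (is_lim_seq_ext (fun N => sum_f_R0 a N));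
      [intro; symmetry; apply sum_n_Reals|exact H].
Qed.

Lemma CV_radius_ge_1 (a : nat -> R) : (forall n, Rabs (a n) <= 1) -> Rbar_le 1 (CV_radius a).
Proof.
  intros Ha. apply (proj1 (CV_radius_bounded a)).
  exists 1; intro n. rewrite pow1, Rmult_1_r. apply Ha.
Qed.

Lemma ex_series_succ_mul_pow r : Rabs r < 1 -> ex_series (fun n => INR (S n) * Rabs r ^ n).
Proof.
  intros Hr.
  assert (Hin : Rbar_lt (Rabs (Rabs r)) (CV_radius (PS_derive (fun _ => 1)))).
  { rewrite CV_radius_derive, Rabs_Rabsolu.
    apply (Rbar_lt_le_trans _ 1); [exact Hr|].
    apply CV_radius_ge_1; intro; rewrite Rabs_R1; lra. }
  eapply ex_series_ext; [|exact (CV_disk_inside _ _ Hin)].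
  intro n. unfold PS_derive. rewrite Rmult_1_r, Rabs_pos_eq; [reflexivity|].
  apply Rmult_le_pos; [apply pos_INR|apply pow_le, Rabs_pos].
Qed.

Lemma series_tail_le (v M : nat -> R) s N : is_series v s ->
  (forall l, Rabs (v l) <= M l) -> ex_series M ->
  Rabs (s - sum_f_R0 v N) <= Series (fun k => M (S N + k)%nat).
Proof.
  intros Hv HvM HM.
  assert (Hex : ex_series v) by (eexists; exact Hv).
  pose proof (Series_incr_n v (S N) ltac:(lia) Hex) as Htail. simpl pred in Htail.
  rewrite (is_series_unique _ _ Hv) in Htail.
  replace (s - sum_f_R0 v N) with (Series (fun k => v (S N + k)%nat)) by lra.
  assert (HMtail : ex_series (fun k => M (S N + k)%nat))
    by (apply (ex_series_incr_n M (S N)), HM).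
  eapply Rle_trans; [apply Series_Rabs|].
  - apply (ex_series_le (K := R_AbsRing) (V := R_CompleteNormedModule))
      with (fun k => M (S N + k)%nat); [|exact HMtail].
    intro k. change (norm (Rabs (v (S N + k)%nat))) with (Rabs (Rabs (v (S N + k)%nat))).
    rewrite Rabs_Rabsolu. apply HvM.
  - apply Series_le; [|exact HMtail]. intro k. split; [apply Rabs_pos|apply HvM].
Qed.

Lemma is_lim_seq_series_tail (M : nat -> R) : ex_series M ->
  is_lim_seq (fun N => Series (fun k => M (S N + k)%nat)) 0.
Proof.
  intros HM.
  apply (is_lim_seq_ext (fun N => Series M - sum_f_R0 M N)).
  { intro N. rewrite (Series_incr_n M (S N) ltac:(lia) HM). simpl pred. ring. }
  replace (Finite 0) with (Finite (Series M - Series M)) by (f_equal; ring).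
  apply is_lim_seq_minus'; [apply is_lim_seq_const|].
  apply is_series_iff_sum_f_R0, Series_correct, HM.
Qed.

Lemma ex_RInt_sum_f_R0 (u : nat -> R -> R) a b N : (forall l, ex_RInt (u l) a b) ->
  ex_RInt (fun x => sum_f_R0 (fun l => u l x) N) a b.
Proof.
  intros Hu. induction N as [|N IH]; [apply Hu|].
  exact (ex_RInt_plus _ _ _ _ IH (Hu (S N))).
Qed.

Lemma RInt_sum_f_R0 (u : nat -> R -> R) a b N : (forall l, ex_RInt (u l) a b) ->
  sum_f_R0 (fun l => RInt (u l) a b) N = RInt (fun x => sum_f_R0 (fun l => u l x) N) a b.
Proof.
  intros Hu. induction N as [|N IH]; [reflexivity|].
  simpl. rewrite IH.
  exact (eq_sym (RInt_plus (V := R_CompleteNormedModule) _ _ a b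
    (ex_RInt_sum_f_R0 u a b N Hu) (Hu (S N)))).
Qed.

Lemma is_series_RInt (u : nat -> R -> R) (f : R -> R) (M : nat -> R) a b : a <= b ->
  (forall l, ex_RInt (u l) a b) -> ex_RInt f a b ->
  (forall l x, a <= x <= b -> Rabs (u l x) <= M l) -> ex_series M ->
  (forall x, a <= x <= b -> is_series (fun l => u l x) (f x)) ->
  is_series (fun l => RInt (u l) a b) (RInt f a b).
Proof.
  intros Hab Hu Hf HuM HM Hser.
  set (tail N := Series (fun k => M (S N + k)%nat)).
  apply is_series_iff_sum_f_R0.
  assert (Hbound : forall N, Rabs (sum_f_R0 (fun l => RInt (u l) a b) N - RInt f a b)
                             <= (b - a) * tail N).
  { intro N.
    replace (sum_f_R0 (fun l => RInt (u l) a b) N - RInt f a b)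
      with (RInt (fun x => sum_f_R0 (fun l => u l x) N - f x) a b).
    2: { rewrite RInt_sum_f_R0 by exact Hu.
         exact (RInt_minus (V := R_CompleteNormedModule) _ _ a b
                  (ex_RInt_sum_f_R0 u a b N Hu) Hf). }
    apply abs_RInt_le_const; [exact Hab| |].
    - apply (ex_RInt_minus (V := R_CompleteNormedModule));
        [apply ex_RInt_sum_f_R0, Hu|exact Hf].
    - intros x Hx. change (minus ?p ?q) with (p - q). rewrite Rabs_minus_sym.
      apply (series_tail_le (fun l => u l x)); [apply Hser, Hx| |exact HM].
      intro l. apply HuM, Hx. }
  apply is_lim_seq_le_le with (fun N => RInt f a b - (b - a) * tail N)
                              (fun N => RInt f a b + (b - a) * tail N).
  - intro N. specialize (Hbound N). apply Rabs_le_between in Hbound. lra.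
  - replace (Finite (RInt f a b)) with (Finite (RInt f a b - (b - a) * 0)) by (f_equal; ring).
    apply is_lim_seq_minus'; [apply is_lim_seq_const|].
    exact (is_lim_seq_scal_l _ (b - a) 0 (is_lim_seq_series_tail M HM)).
  - replace (Finite (RInt f a b)) with (Finite (RInt f a b + (b - a) * 0)) by (f_equal; ring).
    apply is_lim_seq_plus'; [apply is_lim_seq_const|].
    exact (is_lim_seq_scal_l _ (b - a) 0 (is_lim_seq_series_tail M HM)).
Qed.

(** * Legendre polynomials *)

Lemma legendre_SS n x : legendre (S (S n)) x =
  ((2 * INR n + 3) * x * legendre (S n) x - (INR n + 1) * legendre n x) / (INR n + 2).
Proof. unfold legendre; simpl; destruct (legendre_pair n x); reflexivity. Qed.

Lemma legendre_bonnet n x : (INR n + 2) * legendre (S (S n)) x =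
  (2 * INR n + 3) * x * legendre (S n) x - (INR n + 1) * legendre n x.
Proof. rewrite legendre_SS; field; apply INR_plus_2_neq_0. Qed.

Lemma legendre_at_1 n : legendre n 1 = 1.
Proof.
  enough (H : legendre n 1 = 1 /\ legendre (S n) 1 = 1) by apply H.
  induction n as [|n [IH0 IH1]]; [split; reflexivity|].
  split; [exact IH1|]. rewrite legendre_SS, IH0, IH1. field. apply INR_plus_2_neq_0.
Qed.

Lemma legendre_opp n x : legendre n (- x) = (-1) ^ n * legendre n x.
Proof.
  enough (H : legendre n (- x) = (-1) ^ n * legendre n x /\
              legendre (S n) (- x) = (-1) ^ S n * legendre (S n) x) by apply H.
  induction n as [|n [IH0 IH1]]; [split; unfold legendre; simpl; ring|].
  split; [exact IH1|]. rewrite !legendre_SS, IH0, IH1. simpl. field. apply INR_plus_2_neq_0.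
Qed.

Fixpoint dlegendre (n : nat) (x : R) : R :=
  match n with O => 0 | S k => (INR k + 1) * legendre k x + x * dlegendre k x end.
Fixpoint d2legendre (n : nat) (x : R) : R :=
  match n with O => 0 | S k => (INR k + 2) * dlegendre k x + x * d2legendre k x end.

Lemma x_dlegendre_S_sub n x :
  x * dlegendre (S n) x - dlegendre n x = (INR n + 1) * legendre (S n) x.
Proof.
  induction n as [|n IH]; [simpl; unfold legendre; simpl; ring|].
  change (dlegendre (S (S n)) x)
    with ((INR (S n) + 1) * legendre (S n) x + x * dlegendre (S n) x).
  assert (HD : dlegendre (S n) x = (INR n + 1) * legendre n x + x * dlegendre n x)
    by reflexivity.
  rewrite S_INR. pose proof (legendre_bonnet n x). pose proof (f_equal (Rmult x) IH).
  nra.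
Qed.

Lemma one_sub_sq_mul_dlegendre n x :
  (1 - x ^ 2) * dlegendre n x = (INR n + 1) * (x * legendre n x - legendre (S n) x).
Proof.
  induction n as [|n IH]; [simpl; unfold legendre; simpl; ring|].
  change (dlegendre (S n) x) with ((INR n + 1) * legendre n x + x * dlegendre n x).
  rewrite S_INR. pose proof (legendre_bonnet n x). pose proof (f_equal (Rmult x) IH).
  nra.
Qed.

Lemma legendre_ode n x : (1 - x ^ 2) * d2legendre n x - 2 * x * dlegendre n x
  + INR n * (INR n + 1) * legendre n x = 0.
Proof.
  induction n as [|n IH]; [simpl; ring|].
  change (d2legendre (S n) x) with ((INR n + 2) * dlegendre n x + x * d2legendre n x).
  change (dlegendre (S n) x) with ((INR n + 1) * legendre n x + x * dlegendre n x).
  rewrite S_INR. pose proof (f_equal (Rmult x) IH).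
  pose proof (f_equal (Rmult (INR n + 2)) (one_sub_sq_mul_dlegendre n x)). nra.
Qed.

Lemma is_derive_legendre n x : is_derive (legendre n) x (dlegendre n x).
Proof.
  enough (H : forall x, is_derive (legendre n) x (dlegendre n x) /\
                        is_derive (legendre (S n)) x (dlegendre (S n) x)) by apply H.
  induction n as [|n IH]; intro y.
  - split.
    + apply (is_derive_ext (fun _ => 1)); [reflexivity|]. auto_derive; auto.
    + apply (is_derive_ext (fun z => z)); [reflexivity|].
      auto_derive; [auto|simpl; unfold legendre; simpl; ring].
  - split; [apply IH|].
    apply (is_derive_ext (fun z => ((2 * INR n + 3) * z * legendre (S n) z
                                    - (INR n + 1) * legendre n z) / (INR n + 2))).
    { intro; symmetry; apply legendre_SS. }
    destruct (IH y) as [H0 H1].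
    auto_derive; [repeat split; eexists; eassumption|].
    rewrite (is_derive_unique_eta _ _ _ H0), (is_derive_unique_eta _ _ _ H1).
    pose proof (x_dlegendre_S_sub n y).
    change (dlegendre (S (S n)) y)
      with ((INR (S n) + 1) * legendre (S n) y + y * dlegendre (S n) y).
    rewrite S_INR.
    apply Rmult_eq_reg_r with (INR n + 2); [|apply INR_plus_2_neq_0].
    field_simplify; [|apply INR_plus_2_neq_0]. nra.
Qed.

Lemma is_derive_dlegendre n x : is_derive (dlegendre n) x (d2legendre n x).
Proof.
  revert x; induction n as [|n IH]; intro x; [simpl; auto_derive; auto|].
  apply (is_derive_ext (fun y => (INR n + 1) * legendre n y + y * dlegendre n y));
    [reflexivity|].
  pose proof (is_derive_legendre n x) as H0.
  auto_derive; [repeat split; eexists; eauto|].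
  rewrite (is_derive_unique_eta _ _ _ H0), (is_derive_unique_eta _ _ _ (IH x)).
  simpl; ring.
Qed.

Lemma continuous_legendre n x : continuous (legendre n) x.
Proof.
  apply (ex_derive_continuous (V := R_NormedModule)); eexists; apply is_derive_legendre.
Qed.

Lemma continuous_dlegendre n x : continuous (dlegendre n) x.
Proof.
  apply (ex_derive_continuous (V := R_NormedModule)); eexists; apply is_derive_dlegendre.
Qed.

Lemma continuous_d2legendre n x : continuous (d2legendre n) x.
Proof.
  induction n as [|n IH]; simpl; [apply continuous_const|].
  apply (continuous_plus (fun y => (INR n + 2) * dlegendre n y) (fun y => y * d2legendre n y)).
  - apply (continuous_mult (fun _ => INR n + 2) (dlegendre n));
      [apply continuous_const|apply continuous_dlegendre].
  - apply (continuous_mult (fun y => y) (d2legendre n)); [apply continuous_id|exact IH].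
Qed.

(* This energy grows on [0, 1] and equals [1] at [t = 1], whence [P_n(t)^2 <= 1]. *)
Lemma is_derive_legendre_energy n t : (0 < n)%nat ->
  is_derive
    (fun t => legendre n t ^ 2 + (1 - t ^ 2) * dlegendre n t ^ 2 / (INR n * (INR n + 1))) t
    (2 * t * dlegendre n t ^ 2 / (INR n * (INR n + 1))).
Proof.
  intros Hn. pose proof (lt_0_INR _ Hn).
  pose proof (is_derive_legendre n t) as H0.
  pose proof (is_derive_dlegendre n t) as H1.
  auto_derive; [repeat split; eexists; eauto|].
  rewrite (is_derive_unique_eta _ _ _ H0), (is_derive_unique_eta _ _ _ H1).
  pose proof (f_equal (Rmult (dlegendre n t)) (legendre_ode n t)).
  field_simplify; [f_equal; lra|nra|nra].
Qed.

Lemma legendre_sq_le_1_pos n t : 0 <= t <= 1 -> legendre n t ^ 2 <= 1.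
Proof.
  intros Ht. destruct n as [|n]; [unfold legendre; simpl; lra|].
  assert (Hn : (0 < S n)%nat) by lia.
  set (lam := INR (S n) * (INR (S n) + 1)).
  assert (Hlam : 0 < lam) by apply INR_mul_succ_pos, Hn.
  assert (Hdiv : forall a, 0 <= a -> 0 <= a / lam).
  { intros a Ha. apply Rmult_le_pos; [exact Ha|left; apply Rinv_0_lt_compat, Hlam]. }
  assert (Hle := is_derive_nonneg_le _ _ t 1 (proj2 Ht)
    (fun x _ => is_derive_legendre_energy (S n) x Hn)).
  cbv beta in Hle. fold lam in Hle. rewrite legendre_at_1 in Hle.
  assert (0 <= (1 - t ^ 2) * dlegendre (S n) t ^ 2 / lam)
    by (apply Hdiv, Rmult_le_pos; [nra|apply pow2_ge_0]).
  replace (1 ^ 2 + (1 - 1 ^ 2) * dlegendre (S n) 1 ^ 2 / lam) with 1 in Hle by (field; lra).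
  enough (legendre (S n) t ^ 2 + (1 - t ^ 2) * dlegendre (S n) t ^ 2 / lam <= 1) by lra.
  apply Hle. intros x Hx. apply Hdiv, Rmult_le_pos; [lra|apply pow2_ge_0].
Qed.

Lemma Rabs_legendre_le_1 n t : -1 <= t <= 1 -> Rabs (legendre n t) <= 1.
Proof.
  intros Ht.
  enough (legendre n t ^ 2 <= 1) by (apply Rabs_le; nra).
  destruct (Rle_dec 0 t) as [Hpos|Hneg]; [apply legendre_sq_le_1_pos; lra|].
  replace t with (- - t) by ring.
  rewrite legendre_opp, Rpow_mult_distr, <- pow_mult, Nat.mul_comm, pow_mult.
  replace ((-1) ^ 2) with 1 by ring. rewrite pow1, Rmult_1_l.
  apply legendre_sq_le_1_pos; lra.
Qed.

(** * The generating function *)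

Lemma hg_weight_pos g t : Rabs g < 1 -> -1 <= t <= 1 -> 0 < 1 - 2 * g * t + g ^ 2.
Proof.
  intros Hg Ht.
  assert (g * t <= Rabs g).
  { apply Rle_trans with (Rabs (g * t)); [apply Rle_abs|]. rewrite Rabs_mult.
    assert (Rabs t <= 1) by (apply Rabs_le; lra). pose proof (Rabs_pos g). nra. }
  rewrite <- (pow2_abs g). pose proof (Rabs_pos g). nra.
Qed.

Definition hg_phase g t :=
  (1 - g ^ 2) / 2 * (1 / ((1 - 2 * g * t + g ^ 2) * sqrt (1 - 2 * g * t + g ^ 2))).

Lemma legendre_gf_partial g t N :
  (1 - 2 * g * t + g ^ 2) * sum_f_R0 (fun l => INR l * legendre l t * g ^ l) N =
  g * (t - g) * sum_f_R0 (fun l => legendre l t * g ^ l) N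
  - INR (S N) * legendre (S N) t * g ^ S N + INR (S N) * legendre N t * g ^ S (S N).
Proof.
  induction N as [|N IH]; [simpl; unfold legendre; simpl; ring|].
  change (sum_f_R0 ?f (S N)) with (sum_f_R0 f N + f (S N)).
  rewrite Rmult_plus_distr_l, IH, legendre_SS, !S_INR. simpl.
  field. apply INR_plus_2_neq_0.
Qed.

Section GeneratingFunction.
Variable t : R.
Hypothesis Ht : -1 <= t <= 1.
Let a l := legendre l t.

Lemma CV_radius_legendre x : Rabs x < 1 -> Rbar_lt (Rabs x) (CV_radius a).
Proof.
  intros Hx. apply (Rbar_lt_le_trans _ 1); [exact Hx|].
  apply CV_radius_ge_1; intro; apply Rabs_legendre_le_1, Ht.
Qed.

Lemma is_series_legendre_pow x : Rabs x < 1 ->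
  is_series (fun l => a l * x ^ l) (PSeries a x).
Proof.
  intros Hx. apply Series_correct, ex_series_Rabs, CV_disk_inside, CV_radius_legendre, Hx.
Qed.

Lemma is_series_mul_legendre_pow x : Rabs x < 1 ->
  is_series (fun l => INR l * a l * x ^ l) (x * PSeries (PS_derive a) x).
Proof.
  intros Hx.
  assert (Hd : is_series (fun k => PS_derive a k * x ^ k) (PSeries (PS_derive a) x)).
  { apply Series_correct, ex_series_Rabs, CV_disk_inside.
    rewrite CV_radius_derive. apply CV_radius_legendre, Hx. }
  apply is_series_decr_1.
  match goal with |- is_series _ ?v => replace v with (scal x (PSeries (PS_derive a) x))
    by (unfold plus, opp, scal; simpl; unfold mult; simpl; ring) end.
  apply (is_series_scal x) in Hd.
  eapply is_series_ext; [|exact Hd].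
  intro n. unfold PS_derive, scal; simpl; unfold mult; simpl. ring.
Qed.

(* The boundary terms left over by [legendre_gf_partial]. *)
Lemma legendre_gf_remainder_lim x : Rabs x < 1 ->
  is_lim_seq (fun N => - INR (S N) * a (S N) * x ^ S N + INR (S N) * a N * x ^ S (S N)) 0.
Proof.
  intros Hx. apply is_lim_seq_abs_0.
  assert (Hterm : forall N k j,
    Rabs (INR (S N) * a k * x ^ (S j + N)) <= INR (S N) * Rabs x ^ N).
  { intros N k j. unfold a. rewrite !Rabs_mult, <- RPow_abs, pow_add.
    rewrite (Rabs_pos_eq (INR (S N))) by apply pos_INR.
    pose proof (pos_INR (S N)). pose proof (Rabs_legendre_le_1 k t Ht).
    pose proof (pow_lt_1_compat (Rabs x) (S j) (conj (Rabs_pos x) Hx) ltac:(lia)).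
    pose proof (pow_le (Rabs x) N (Rabs_pos x)). pose proof (Rabs_pos (legendre k t)).
    assert (Rabs (legendre k t) * Rabs x ^ S j <= 1) by nra.
    replace (INR (S N) * Rabs (legendre k t) * (Rabs x ^ S j * Rabs x ^ N))
      with (INR (S N) * Rabs x ^ N * (Rabs (legendre k t) * Rabs x ^ S j)) by ring.
    rewrite <- (Rmult_1_r (INR (S N) * Rabs x ^ N)) at 2.
    apply Rmult_le_compat_l; [apply Rmult_le_pos|]; assumption. }
  apply is_lim_seq_le_le with (fun _ => 0) (fun N => 2 * (INR (S N) * Rabs x ^ N)).
  - intro N. split; [apply Rabs_pos|].
    change (x ^ S N) with (x ^ (S 0 + N)). rewrite <- !Ropp_mult_distr_l.
    eapply Rle_trans; [apply Rabs_triang|]. rewrite Rabs_Ropp.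
    pose proof (Hterm N (S N) 0%nat). pose proof (Hterm N N 1%nat). simpl in *. lra.
  - apply is_lim_seq_const.
  - replace (Finite 0) with (Rbar_mult 2 0) by (simpl; f_equal; ring).
    apply is_lim_seq_scal_l, ex_series_lim_0, ex_series_succ_mul_pow, Hx.
Qed.

Lemma x_legendre_gf_ode x : Rabs x < 1 ->
  (1 - 2 * x * t + x ^ 2) * (x * PSeries (PS_derive a) x) = x * (t - x) * PSeries a x.
Proof.
  intros Hx.
  pose proof (proj1 (is_series_iff_sum_f_R0 _ _) (is_series_legendre_pow x Hx)) as HS.
  pose proof (proj1 (is_series_iff_sum_f_R0 _ _) (is_series_mul_legendre_pow x Hx)) as HQ.
  apply (is_lim_seq_scal_l _ (1 - 2 * x * t + x ^ 2)) in HQ.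
  assert (H : is_lim_seq
    (fun N => (1 - 2 * x * t + x ^ 2) * sum_f_R0 (fun l => INR l * a l * x ^ l) N)
    (x * (t - x) * PSeries a x + 0)).
  { apply (is_lim_seq_ext (fun N => x * (t - x) * sum_f_R0 (fun l => a l * x ^ l) N
      + (- INR (S N) * a (S N) * x ^ S N + INR (S N) * a N * x ^ S (S N)))).
    { intro N. unfold a. rewrite legendre_gf_partial. ring. }
    apply is_lim_seq_plus'; [|apply legendre_gf_remainder_lim, Hx].
    exact (is_lim_seq_scal_l _ _ _ HS). }
  apply is_lim_seq_unique in HQ, H. rewrite HQ in H. simpl in H.
  injection H as H. rewrite Rplus_0_r in H. exact H.
Qed.

Lemma legendre_gf_ode x : Rabs x < 1 ->
  (1 - 2 * x * t + x ^ 2) * PSeries (PS_derive a) x = (t - x) * PSeries a x.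
Proof.
  intros Hx. destruct (Req_dec x 0) as [->|Hx0].
  - rewrite !PSeries_0. unfold PS_derive, a, legendre; simpl. ring.
  - apply Rmult_eq_reg_l with x; [|exact Hx0].
    transitivity ((1 - 2 * x * t + x ^ 2) * (x * PSeries (PS_derive a) x)); [ring|].
    rewrite x_legendre_gf_ode by exact Hx. ring.
Qed.

Lemma is_derive_legendre_gf_mul_sqrt x : Rabs x < 1 ->
  is_derive (fun y => PSeries a y * sqrt (1 - 2 * y * t + y ^ 2)) x 0.
Proof.
  intros Hx. pose proof (hg_weight_pos x t Hx Ht) as Hw.
  assert (Hs : 0 < sqrt (1 - 2 * x * t + x ^ 2)) by (apply sqrt_lt_R0, Hw).
  pose proof (is_derive_PSeries a x (CV_radius_legendre x Hx)) as HP.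
  auto_derive; [split; [eexists; exact HP|split; [lra|exact I]]|].
  rewrite (is_derive_unique_eta _ _ _ HP).
  replace (1 + - (2 * x * t) + x * (x * 1)) with (1 - 2 * x * t + x ^ 2) by ring.
  pose proof (legendre_gf_ode x Hx).
  field_simplify; [|lra]. rewrite pow2_sqrt by lra.
  unfold Rdiv. apply Rmult_eq_0_compat_r. lra.
Qed.

Lemma legendre_gf g : Rabs g < 1 -> PSeries a g * sqrt (1 - 2 * g * t + g ^ 2) = 1.
Proof.
  intros Hg.
  transitivity (PSeries a 0 * sqrt (1 - 2 * 0 * t + 0 ^ 2)).
  - symmetry. apply (is_derive_0_eq (fun y => PSeries a y * sqrt (1 - 2 * y * t + y ^ 2))).
    intros x Hx. apply is_derive_legendre_gf_mul_sqrt.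
    apply Rle_lt_trans with (Rabs g); [|exact Hg].
    unfold Rmin, Rmax in Hx. destruct (Rle_dec 0 g); split_Rabs; lra.
  - rewrite PSeries_0. replace (1 - 2 * 0 * t + 0 ^ 2) with 1 by ring.
    rewrite sqrt_1. unfold a, legendre; simpl; ring.
Qed.

Lemma is_series_legendre_weighted g : Rabs g < 1 ->
  is_series (fun l => (2 * INR l + 1) / 2 * g ^ l * legendre l t) (hg_phase g t).
Proof.
  intros Hg.
  pose proof (hg_weight_pos g t Hg Ht) as Hw.
  assert (Hs : 0 < sqrt (1 - 2 * g * t + g ^ 2)) by (apply sqrt_lt_R0, Hw).
  pose proof (is_series_plus _ _ _ _ (is_series_mul_legendre_pow g Hg)
    (is_series_scal (1 / 2) _ _ (is_series_legendre_pow g Hg))) as Hsum.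
  eapply is_series_ext; [|match type of Hsum with is_series _ ?v =>
    match goal with |- is_series _ ?w => replace w with v; [exact Hsum|] end end].
  - intro n. unfold plus, scal; simpl; unfold mult; simpl. unfold a. field.
  - unfold plus, scal; simpl; unfold mult; simpl.
    assert (EPd : PSeries (PS_derive a) g
      = (t - g) * PSeries a g / (1 - 2 * g * t + g ^ 2)).
    { apply Rmult_eq_reg_l with (1 - 2 * g * t + g ^ 2); [|lra].
      rewrite legendre_gf_ode by exact Hg. field. lra. }
    assert (EP : PSeries a g = / sqrt (1 - 2 * g * t + g ^ 2)).
    { apply Rmult_eq_reg_r with (sqrt (1 - 2 * g * t + g ^ 2)); [|lra].
      rewrite legendre_gf by exact Hg. field. lra. }
    rewrite EPd, EP. change (g * (g * 1)) with (g ^ 2). unfold hg_phase. field. lra.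
Qed.

End GeneratingFunction.

(** * Laplace's addition theorem *)

Section TrigLegendreEquation.
Variables (h h1 h2 : R -> R) (lam : R).
Hypothesis lam_pos : 0 < lam.
Hypothesis is_derive_h : forall u, is_derive h u (h1 u).
Hypothesis is_derive_h1 : forall u, is_derive h1 u (h2 u).
Hypothesis h_ode : forall u, sin u * h2 u + cos u * h1 u + lam * sin u * h u = 0.

Let energy u := h u ^ 2 + h1 u ^ 2 / lam.
Let denergy u := 2 * h u * h1 u + 2 * h1 u * h2 u / lam.

Lemma is_derive_trig_energy u : is_derive energy u (denergy u).
Proof.
  pose proof (is_derive_h u) as H0. pose proof (is_derive_h1 u) as H1.
  unfold energy, denergy.
  auto_derive; [repeat split; try (eexists; eassumption); lra|].
  rewrite (is_derive_unique_eta _ _ _ H0), (is_derive_unique_eta _ _ _ H1).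
  field. lra.
Qed.

(* Hence the energy decreases on [0, PI/2] and increases on [PI/2, PI]. *)
Lemma sin_mul_denergy u : sin u * denergy u = - 2 * cos u * h1 u ^ 2 / lam.
Proof.
  unfold denergy.
  transitivity (2 * h1 u * (sin u * h u) + 2 * h1 u * (sin u * h2 u) / lam); [field; lra|].
  replace (sin u * h2 u) with (- cos u * h1 u - lam * sin u * h u)
    by (pose proof (h_ode u); lra).
  field. lra.
Qed.

Lemma denergy_sign u : 0 < u < PI ->
  (u <= PI / 2 -> denergy u <= 0) /\ (PI / 2 <= u -> 0 <= denergy u).
Proof.
  intros Hu. pose proof (sin_gt_0 u (proj1 Hu) (proj2 Hu)) as Hs.
  pose proof (sin_mul_denergy u) as Hsd.
  assert (0 <= h1 u ^ 2 / lam)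
    by (apply Rmult_le_pos; [apply pow2_ge_0|left; apply Rinv_0_lt_compat, lam_pos]).
  split; intro Hhalf.
  - assert (0 <= cos u) by (apply cos_ge_0; lra). nra.
  - assert (cos u <= 0) by (apply cos_le_0; lra). nra.
Qed.

Lemma trig_legendre_bvp_zero : h 0 = 0 -> h1 0 = 0 -> h PI = 0 -> h1 PI = 0 ->
  forall x, 0 <= x <= PI -> h x = 0.
Proof.
  intros H0 H10 HPI H1PI x Hx. pose proof PI_RGT_0.
  assert (Hend : forall u, u = 0 \/ u = PI -> denergy u = 0)
    by (intros u [-> | ->]; unfold denergy; [rewrite H10|rewrite H1PI]; field; lra).
  assert (HE : energy x <= 0).
  { destruct (Rle_dec x (PI / 2)).
    - assert (energy 0 = 0) by (unfold energy; rewrite H0, H10; field; lra).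
      enough (energy x <= energy 0) by lra.
      apply (is_derive_nonpos_ge energy denergy); [lra|intros; apply is_derive_trig_energy|].
      intros u Hu. destruct (Req_dec u 0) as [->|Hu0]; [rewrite Hend; [lra|auto]|].
      apply denergy_sign; lra.
    - assert (energy PI = 0) by (unfold energy; rewrite HPI, H1PI; field; lra).
      enough (energy x <= energy PI) by lra.
      apply (is_derive_nonneg_le energy denergy); [lra|intros; apply is_derive_trig_energy|].
      intros u Hu. destruct (Req_dec u PI) as [->|HuPI]; [rewrite Hend; [lra|auto]|].
      apply denergy_sign; lra. }
  unfold energy in HE.
  assert (0 <= h1 x ^ 2 / lam)
    by (apply Rmult_le_pos; [apply pow2_ge_0|left; apply Rinv_0_lt_compat, lam_pos]).
  pose proof (pow2_ge_0 (h x)). nra.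
Qed.

End TrigLegendreEquation.

(* The cosine of the spherical distance between the points of colatitude [th] and [mu]
   whose longitudes differ by [ph], and its derivative in [th]. *)
Definition sph_cos mu th ph := cos th * cos mu + sin th * sin mu * cos ph.
Definition sph_cos_dth mu th ph := - sin th * cos mu + cos th * sin mu * cos ph.

Lemma sph_cos_norm mu th ph :
  sph_cos_dth mu th ph ^ 2 + sph_cos mu th ph ^ 2 + sin mu ^ 2 * sin ph ^ 2 = 1.
Proof.
  unfold sph_cos, sph_cos_dth.
  transitivity ((sin th ^ 2 + cos th ^ 2) * (cos mu ^ 2 + sin mu ^ 2 * cos ph ^ 2)
                + sin mu ^ 2 * sin ph ^ 2); [ring|].
  rewrite sin_cos_sq.
  transitivity (cos mu ^ 2 + sin mu ^ 2 * (sin ph ^ 2 + cos ph ^ 2)); [ring|].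
  rewrite sin_cos_sq, Rmult_1_r, Rplus_comm. apply sin_cos_sq.
Qed.

Lemma sph_cos_bound mu th ph : -1 <= sph_cos mu th ph <= 1.
Proof.
  pose proof (sph_cos_norm mu th ph).
  pose proof (pow2_ge_0 (sph_cos_dth mu th ph)).
  assert (0 <= sin mu ^ 2 * sin ph ^ 2) by (apply Rmult_le_pos; apply pow2_ge_0).
  nra.
Qed.

Lemma continuous_sph_cos mu th ph : continuous (sph_cos mu th) ph.
Proof.
  apply (ex_derive_continuous (V := R_NormedModule)). unfold sph_cos. auto_derive; auto.
Qed.

Lemma sph_cos_rotate mu th ph :
  sin th * sph_cos mu th ph + cos th * sph_cos_dth mu th ph = sin mu * cos ph.
Proof.
  unfold sph_cos, sph_cos_dth.
  transitivity (sin mu * cos ph * (sin th ^ 2 + cos th ^ 2)); [ring|].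
  rewrite sin_cos_sq. ring.
Qed.

Lemma is_derive_sph_cos mu th ph :
  is_derive (fun w => sph_cos mu w ph) th (sph_cos_dth mu th ph).
Proof. unfold sph_cos, sph_cos_dth. auto_derive; auto. ring. Qed.

Lemma is_derive_sph_cos_dth mu th ph :
  is_derive (fun w => sph_cos_dth mu w ph) th (- sph_cos mu th ph).
Proof. unfold sph_cos, sph_cos_dth. auto_derive; auto. ring. Qed.

Lemma continuity_2d_pt_sph_cos mu x y : continuity_2d_pt (sph_cos mu) x y.
Proof.
  unfold sph_cos. apply continuity_2d_pt_plus; apply continuity_2d_pt_mult;
    try apply continuity_2d_pt_mult; try apply continuity_2d_pt_const;
    apply continuity_2d_pt_comp_continuous;
    try apply continuity_2d_pt_id1; try apply continuity_2d_pt_id2;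
    intro; apply continuity_pt_filterlim; [apply continuity_cos|apply continuity_sin|
      apply continuity_cos].
Qed.

Lemma continuity_2d_pt_sph_cos_dth mu x y : continuity_2d_pt (sph_cos_dth mu) x y.
Proof.
  assert (Hsin : forall z, continuous sin z)
    by (intro; apply continuity_pt_filterlim, continuity_sin).
  assert (Hcos : forall z, continuous cos z)
    by (intro; apply continuity_pt_filterlim, continuity_cos).
  unfold sph_cos_dth. apply continuity_2d_pt_plus.
  - apply continuity_2d_pt_mult; [|apply continuity_2d_pt_const].
    apply continuity_2d_pt_opp, continuity_2d_pt_comp_continuous;
      [exact Hsin|apply continuity_2d_pt_id1].
  - apply continuity_2d_pt_mult; [apply continuity_2d_pt_mult|];
      try apply continuity_2d_pt_const;
      apply continuity_2d_pt_comp_continuous; try exact Hcos;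
      [apply continuity_2d_pt_id1|apply continuity_2d_pt_id2].
Qed.

Section LaplaceAddition.
Variables (mu : R) (l : nat).
Let lam := INR l * (INR l + 1).

Let f0 u v := legendre l (sph_cos mu u v).
Let f1 u v := dlegendre l (sph_cos mu u v) * sph_cos_dth mu u v.
Let f2 u v := d2legendre l (sph_cos mu u v) * sph_cos_dth mu u v * sph_cos_dth mu u v
              - dlegendre l (sph_cos mu u v) * sph_cos mu u v.

Lemma is_derive_f0 u v : is_derive (fun w => f0 w v) u (f1 u v).
Proof.
  pose proof (is_derive_comp _ _ u _ _ (is_derive_legendre l _) (is_derive_sph_cos mu u v))
    as H.
  unfold f0, f1. eapply is_derive_ext; [|evar_last; [exact H|]]; [reflexivity|].
  unfold scal; simpl; unfold mult; simpl; ring.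
Qed.

Lemma is_derive_f1 u v : is_derive (fun w => f1 w v) u (f2 u v).
Proof.
  pose proof (is_derive_comp _ _ u _ _ (is_derive_dlegendre l _) (is_derive_sph_cos mu u v))
    as H.
  pose proof (is_derive_mult _ _ _ _ _ H (is_derive_sph_cos_dth mu u v)
    ltac:(intros; apply Rmult_comm)) as HM.
  unfold f1, f2. eapply is_derive_ext; [|evar_last; [exact HM|]]; [reflexivity|].
  unfold plus, mult, scal; simpl; unfold mult; simpl; ring.
Qed.

Lemma continuity_2d_pt_f0 x y : continuity_2d_pt f0 x y.
Proof.
  unfold f0. apply continuity_2d_pt_comp_continuous;
    [apply continuous_legendre|apply continuity_2d_pt_sph_cos].
Qed.

Lemma continuity_2d_pt_f1 x y : continuity_2d_pt f1 x y.
Proof.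
  unfold f1. apply continuity_2d_pt_mult; [|apply continuity_2d_pt_sph_cos_dth].
  apply continuity_2d_pt_comp_continuous;
    [apply continuous_dlegendre|apply continuity_2d_pt_sph_cos].
Qed.

Lemma continuity_2d_pt_f2 x y : continuity_2d_pt f2 x y.
Proof.
  unfold f2. apply continuity_2d_pt_minus; apply continuity_2d_pt_mult;
    try apply continuity_2d_pt_mult; try apply continuity_2d_pt_sph_cos;
    try apply continuity_2d_pt_sph_cos_dth;
    apply continuity_2d_pt_comp_continuous; try apply continuity_2d_pt_sph_cos;
    [apply continuous_d2legendre|apply continuous_dlegendre].
Qed.

Let F u : R := RInt (f0 u) 0 PI.
Let F1 u : R := RInt (f1 u) 0 PI.
Let F2 u : R := RInt (f2 u) 0 PI.

(* Legendre's operator in [u] maps the integrand to an exact derivative in [v]. *)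
Lemma is_derive_addition_flux u v :
  is_derive (fun w => sin mu * dlegendre l (sph_cos mu u w) * sin w) v
    (sin u * f2 u v + cos u * f1 u v + lam * sin u * f0 u v).
Proof.
  assert (Hc : is_derive (fun w => sph_cos mu u w) v (- sin u * sin mu * sin v))
    by (unfold sph_cos; auto_derive; auto; ring).
  pose proof (is_derive_comp _ _ v _ _ (is_derive_dlegendre l _) Hc) as H.
  pose proof (is_derive_mult _ _ _ _ _ H (is_derive_sin v) ltac:(intros; apply Rmult_comm))
    as HM.
  apply (is_derive_scal _ v (sin mu)) in HM.
  eapply is_derive_ext; [|evar_last; [exact HM|]].
  { intro w. unfold scal, mult; simpl; unfold mult; simpl. ring. }
  unfold scal, mult, plus; simpl; unfold mult, plus; simpl. unfold f0, f1, f2, lam.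
  pose proof (legendre_ode l (sph_cos mu u v)) as Hode.
  pose proof (sph_cos_norm mu u v) as Hnorm.
  pose proof (sph_cos_rotate mu u v) as Hrot.
  set (P := legendre l (sph_cos mu u v)) in *.
  set (D := dlegendre l (sph_cos mu u v)) in *.
  set (D2 := d2legendre l (sph_cos mu u v)) in *.
  set (c := sph_cos mu u v) in *. set (t := sph_cos_dth mu u v) in *.
  transitivity (sin mu * (D2 * (- sin u * sin mu * sin v) * sin v + D * cos v)
    + sin u * D2 * (t ^ 2 + c ^ 2 + sin mu ^ 2 * sin v ^ 2 - 1)
    + D * (sin u * c + cos u * t - sin mu * cos v)
    + sin u * ((1 - c ^ 2) * D2 - 2 * c * D + INR l * (INR l + 1) * P)).
  - rewrite Hode, Hnorm, Hrot. ring.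
  - ring.
Qed.

Lemma is_derive_F u : is_derive F u (F1 u).
Proof. exact (is_derive_RInt_continuity_2d f0 f1 0 PI u is_derive_f0
  continuity_2d_pt_f1 continuity_2d_pt_f0). Qed.

Lemma is_derive_F1 u : is_derive F1 u (F2 u).
Proof. exact (is_derive_RInt_continuity_2d f1 f2 0 PI u is_derive_f1
  continuity_2d_pt_f2 continuity_2d_pt_f1). Qed.

Lemma F_ode u : sin u * F2 u + cos u * F1 u + lam * sin u * F u = 0.
Proof.
  pose proof (RInt_correct _ _ _ (ex_RInt_continuity_2d_pt f2 u 0 PI continuity_2d_pt_f2))
    as I2.
  pose proof (RInt_correct _ _ _ (ex_RInt_continuity_2d_pt f1 u 0 PI continuity_2d_pt_f1))
    as I1.
  pose proof (RInt_correct _ _ _ (ex_RInt_continuity_2d_pt f0 u 0 PI continuity_2d_pt_f0))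
    as I0.
  pose proof (is_RInt_plus _ _ _ _ _ _
    (is_RInt_plus _ _ _ _ _ _ (is_RInt_scal _ _ _ (sin u) _ I2)
                              (is_RInt_scal _ _ _ (cos u) _ I1))
    (is_RInt_scal _ _ _ (lam * sin u) _ I0)) as Hsum.
  assert (Hflux : is_RInt (fun v => sin u * f2 u v + cos u * f1 u v + lam * sin u * f0 u v)
    0 PI (minus (sin mu * dlegendre l (sph_cos mu u PI) * sin PI)
                (sin mu * dlegendre l (sph_cos mu u 0) * sin 0))).
  { apply (is_RInt_derive (V := R_CompleteNormedModule)
      (fun w => sin mu * dlegendre l (sph_cos mu u w) * sin w)).
    - intros; apply is_derive_addition_flux.
    - intros x _.
      apply (continuous_plus (V := R_NormedModule)
        (fun v => sin u * f2 u v + cos u * f1 u v) (fun v => lam * sin u * f0 u v));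
        [apply (continuous_plus (V := R_NormedModule)
          (fun v => sin u * f2 u v) (fun v => cos u * f1 u v))|];
        apply (continuous_scal_r (V := R_NormedModule));
        apply continuity_2d_pt_continuous_r;
        [apply continuity_2d_pt_f2|apply continuity_2d_pt_f1|apply continuity_2d_pt_f0]. }
  rewrite sin_PI, sin_0 in Hflux.
  apply (is_RInt_unique (V := R_CompleteNormedModule)) in Hsum, Hflux.
  unfold plus, scal in Hsum; simpl in Hsum; unfold plus, mult in Hsum; simpl in Hsum.
  unfold minus, plus, opp in Hflux; simpl in Hflux.
  unfold F, F1, F2. rewrite <- Hsum, Hflux. ring.
Qed.

Let Pmu := legendre l (cos mu).
Let g0 u := PI * Pmu * legendre l (cos u).
Let g1 u := PI * Pmu * (dlegendre l (cos u) * - sin u).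
Let g2 u := PI * Pmu * (d2legendre l (cos u) * sin u * sin u - dlegendre l (cos u) * cos u).

Lemma is_derive_g0 u : is_derive g0 u (g1 u).
Proof.
  pose proof (is_derive_comp _ _ u _ _ (is_derive_legendre l _) (is_derive_cos u)) as H.
  apply (is_derive_scal _ u (PI * Pmu)) in H.
  unfold g0, g1. eapply is_derive_ext; [|evar_last; [exact H|]]; [reflexivity|].
  unfold scal; simpl; unfold mult; simpl. ring.
Qed.

Lemma is_derive_g1 u : is_derive g1 u (g2 u).
Proof.
  pose proof (is_derive_comp _ _ u _ _ (is_derive_dlegendre l _) (is_derive_cos u)) as H.
  assert (Hs : is_derive (fun x => - sin x) u (- cos u)) by (auto_derive; auto; ring).
  pose proof (is_derive_mult _ _ _ _ _ H Hs ltac:(intros; apply Rmult_comm)) as HM.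
  apply (is_derive_scal _ u (PI * Pmu)) in HM.
  unfold g1, g2. eapply is_derive_ext; [|evar_last; [exact HM|]]; [reflexivity|].
  unfold scal, mult, plus; simpl; unfold mult, plus; simpl. ring.
Qed.

Lemma g_ode u : sin u * g2 u + cos u * g1 u + lam * sin u * g0 u = 0.
Proof.
  pose proof (legendre_ode l (cos u)) as Hode. pose proof (sin_cos_sq u) as Htrig.
  unfold g0, g1, g2, lam.
  transitivity (PI * Pmu * sin u * ((1 - cos u ^ 2) * d2legendre l (cos u)
      - 2 * cos u * dlegendre l (cos u) + INR l * (INR l + 1) * legendre l (cos u))
    + PI * Pmu * sin u * d2legendre l (cos u) * (sin u ^ 2 + cos u ^ 2 - 1)); [ring|].
  rewrite Hode, Htrig. ring.
Qed.

Lemma F_0 : F 0 = g0 0.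
Proof.
  unfold F, g0. rewrite (RInt_ext _ (fun _ => Pmu)).
  - rewrite RInt_0_PI_const, cos_0, legendre_at_1. ring.
  - intros v _. unfold f0, Pmu, sph_cos. rewrite cos_0, sin_0. f_equal. ring.
Qed.

Lemma F1_0 : F1 0 = g1 0.
Proof.
  unfold F1, g1. rewrite (RInt_ext _ (fun v => dlegendre l (cos mu) * sin mu * cos v)).
  - rewrite RInt_0_PI_cos_scal, sin_0. ring.
  - intros v _. change (@eq _ ?a ?b) with (@eq R a b).
    unfold f1, sph_cos, sph_cos_dth. rewrite cos_0, sin_0.
    replace (1 * cos mu + 0 * sin mu * cos v) with (cos mu) by ring. ring.
Qed.

Lemma F_PI : F PI = g0 PI.
Proof.
  unfold F, g0. rewrite (RInt_ext _ (fun _ => legendre l (- cos mu))).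
  - rewrite RInt_0_PI_const, cos_PI. replace (-1) with (- (1)) by ring.
    rewrite !legendre_opp, legendre_at_1. unfold Pmu. ring.
  - intros v _. unfold f0, sph_cos. rewrite cos_PI, sin_PI. f_equal. ring.
Qed.

Lemma F1_PI : F1 PI = g1 PI.
Proof.
  unfold F1, g1.
  rewrite (RInt_ext _ (fun v => - dlegendre l (- cos mu) * sin mu * cos v)).
  - rewrite RInt_0_PI_cos_scal, sin_PI. ring.
  - intros v _. change (@eq _ ?a ?b) with (@eq R a b).
    unfold f1, sph_cos, sph_cos_dth. rewrite cos_PI, sin_PI.
    replace (-1 * cos mu + 0 * sin mu * cos v) with (- cos mu) by ring. ring.
Qed.

Lemma RInt_legendre_sph_cos th : 0 <= th <= PI ->
  RInt (fun v => legendre l (sph_cos mu th v)) 0 PI = PI * legendre l (cos th) * Pmu.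
Proof.
  intros Hth. destruct (Nat.eq_0_gt_0_cases l) as [Hl|Hl].
  - unfold Pmu. rewrite Hl, (RInt_ext _ (fun _ => 1)) by reflexivity.
    rewrite RInt_0_PI_const. unfold legendre; simpl; ring.
  - enough (F th - g0 th = 0) by (unfold F, f0, g0 in *; lra).
    apply (trig_legendre_bvp_zero (fun u => F u - g0 u) (fun u => F1 u - g1 u)
      (fun u => F2 u - g2 u) lam); try lra.
    + apply INR_mul_succ_pos, Hl.
    + intro u. exact (is_derive_minus _ _ u _ _ (is_derive_F u) (is_derive_g0 u)).
    + intro u. exact (is_derive_minus _ _ u _ _ (is_derive_F1 u) (is_derive_g1 u)).
    + intro u. pose proof (F_ode u). pose proof (g_ode u). lra.
    + rewrite F_0; ring.
    + rewrite F1_0; ring.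
    + rewrite F_PI; ring.
    + rewrite F1_PI; ring.
Qed.

End LaplaceAddition.

(** * Complete elliptic integrals *)

Lemma one_sub_mul_sin_sq_pos m s : m < 1 -> 0 < 1 - m * sin s ^ 2.
Proof.
  intros Hm. pose proof (sin_cos_sq s).
  pose proof (pow2_ge_0 (sin s)). pose proof (pow2_ge_0 (cos s)).
  destruct (Rle_dec m 0); nra.
Qed.

Section EllipticE.
Variable m : R.
Hypothesis Hm : m < 1.

Lemma continuous_elliptic_integrand s : continuous (fun s => 1 - m * sin s ^ 2) s.
Proof.
  apply (ex_derive_continuous (V := R_NormedModule)). auto_derive. exact I.
Qed.

Lemma continuous_elliptic_m32 s :
  continuous (fun s => 1 / ((1 - m * sin s ^ 2) * sqrt (1 - m * sin s ^ 2))) s.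
Proof.
  apply continuous_inv_mul_sqrt;
    [apply continuous_elliptic_integrand|apply one_sub_mul_sin_sq_pos, Hm].
Qed.

Lemma is_derive_elliptic_antideriv s :
  is_derive (fun s => m * (sin s * cos s / sqrt (1 - m * sin s ^ 2))) s
    (sqrt (1 - m * sin s ^ 2)
     - (1 - m) * (1 / ((1 - m * sin s ^ 2) * sqrt (1 - m * sin s ^ 2)))).
Proof.
  pose proof (one_sub_mul_sin_sq_pos m s Hm) as Hq.
  assert (Hr : 0 < sqrt (1 - m * sin s ^ 2)) by (apply sqrt_lt_R0; lra).
  assert (Hrr := sqrt_sqrt _ (Rlt_le _ _ Hq)).
  pose proof (sin_cos_sq s).
  auto_derive; replace (1 + - (m * (sin s * (sin s * 1)))) with (1 - m * sin s ^ 2) by ring;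
    [repeat split; lra|].
  set (r := sqrt (1 - m * sin s ^ 2)) in *.
  transitivity ((m * (cos s ^ 2 - sin s ^ 2) * r ^ 2 + m ^ 2 * sin s ^ 2 * cos s ^ 2)
                / r ^ 3); [field; lra|].
  transitivity ((r ^ 4 - (1 - m)) / r ^ 3).
  { f_equal. replace (r ^ 4) with ((r * r) ^ 2) by ring. rewrite Hrr.
    replace (r ^ 2) with (r * r) by ring. rewrite Hrr.
    replace (cos s ^ 2) with (1 - sin s ^ 2) by lra. ring. }
  rewrite <- Hrr. field. lra.
Qed.

Lemma RInt_elliptic_m32 :
  RInt (fun s => 1 / ((1 - m * sin s ^ 2) * sqrt (1 - m * sin s ^ 2))) 0 (PI / 2)
  = E0 m / (1 - m).
Proof.
  set (q := fun s => 1 - m * sin s ^ 2).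
  assert (Hq : forall s, continuous q s) by apply continuous_elliptic_integrand.
  assert (Hsqrt : forall s, continuous (fun s => sqrt (q s)) s)
    by (intro; apply continuous_sqrt_comp, Hq).
  assert (Hinv : forall s, continuous (fun s => 1 / (q s * sqrt (q s))) s)
    by apply continuous_elliptic_m32.
  assert (Hftc : is_RInt (fun s => sqrt (q s) - (1 - m) * (1 / (q s * sqrt (q s)))) 0 (PI / 2)
    (minus (m * (sin (PI / 2) * cos (PI / 2) / sqrt (q (PI / 2))))
           (m * (sin 0 * cos 0 / sqrt (q 0))))).
  { apply (is_RInt_derive (V := R_CompleteNormedModule)
      (fun s => m * (sin s * cos s / sqrt (q s)))).
    - intros; apply is_derive_elliptic_antideriv.
    - intros s _. apply (continuous_minus (V := R_NormedModule)); [apply Hsqrt|].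
      apply (continuous_scal_r (V := R_NormedModule)), Hinv. }
  pose proof (is_RInt_minus _ _ _ _ _ _
    (RInt_correct _ _ _ (ex_RInt_continuous (V := R_CompleteNormedModule) _ 0 (PI / 2)
       (fun s _ => Hsqrt s)))
    (is_RInt_scal _ _ _ (1 - m) _
       (RInt_correct _ _ _ (ex_RInt_continuous (V := R_CompleteNormedModule) _ 0 (PI / 2)
          (fun s _ => Hinv s))))) as Hlin.
  pose proof (is_RInt_unique_R _ _ _ _ _ Hftc Hlin) as Heq.
  rewrite cos_PI2, sin_0 in Heq. unfold minus, plus, opp, scal in Heq; simpl in Heq.
  unfold mult in Heq; simpl in Heq.
  replace (m * (sin (PI / 2) * 0 / sqrt (q (PI / 2))) + - (m * (0 * cos 0 / sqrt (q 0))))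
    with 0 in Heq by (unfold Rdiv; ring).
  unfold E0. apply Rmult_eq_reg_l with (1 - m); [|lra].
  field_simplify; [unfold q in Heq; lra|lra].
Qed.

End EllipticE.

Lemma sub_mul_cos_pos A B v : 0 < A - B -> 0 < A + B -> 0 < A - B * cos v.
Proof. intros H1 H2. pose proof (COS_bound v). destruct (Rle_dec 0 B); nra. Qed.

Lemma continuous_cos_m32 A B v : 0 < A - B -> 0 < A + B ->
  continuous (fun v => 1 / ((A - B * cos v) * sqrt (A - B * cos v))) v.
Proof.
  intros H1 H2. apply continuous_inv_mul_sqrt; [|apply sub_mul_cos_pos; assumption].
  apply (ex_derive_continuous (V := R_NormedModule)). auto_derive. exact I.
Qed.

(* Substituting [v = PI - 2 y] turns [A - B cos v] into [(A + B) (1 - m sin^2 y)]. *)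
Lemma RInt_0_PI_cos_m32 A B : 0 < A - B -> 0 < A + B ->
  RInt (fun v => 1 / ((A - B * cos v) * sqrt (A - B * cos v))) 0 PI
  = 2 / ((A - B) * sqrt (A + B)) * E0 (2 * B / (A + B)).
Proof.
  intros H1 H2.
  set (f := fun v => 1 / ((A - B * cos v) * sqrt (A - B * cos v))).
  assert (Hf : forall a b, ex_RInt f a b).
  { intros a b. apply (ex_RInt_continuous (V := R_CompleteNormedModule)). intros v _.
    apply continuous_cos_m32; assumption. }
  set (m := 2 * B / (A + B)).
  assert (Hm : m < 1) by (unfold m; apply Rmult_lt_reg_r with (A + B); [lra|];
                          field_simplify; lra).
  set (k := 1 / ((A + B) * sqrt (A + B))).
  assert (Hsp : 0 < sqrt (A + B)) by (apply sqrt_lt_R0; lra).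
  assert (Hsubst : forall y, scal (-2) (f (-2 * y + PI))
    = scal (-2 * k) (1 / ((1 - m * sin y ^ 2) * sqrt (1 - m * sin y ^ 2)))).
  { intro y. change (scal ?a ?b) with (a * b). unfold f, k.
    change (@eq _ ?a ?b) with (@eq R a b).
    pose proof (one_sub_mul_sin_sq_pos m y Hm) as Hq.
    replace (A - B * cos (-2 * y + PI)) with ((A + B) * (1 - m * sin y ^ 2)).
    - rewrite sqrt_mult by lra.
      assert (0 < sqrt (1 - m * sin y ^ 2)) by (apply sqrt_lt_R0; lra).
      field. repeat split; lra.
    - replace (-2 * y + PI) with (PI - 2 * y) by ring.
      rewrite Rtrigo_facts.cos_pi_minus, cos_2a_sin. unfold m. field. lra. }
  pose proof (RInt_comp_lin f (-2) PI 0 (PI / 2) (Hf _ _)) as Hlin.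
  replace (-2 * 0 + PI) with PI in Hlin by ring.
  replace (-2 * (PI / 2) + PI) with 0 in Hlin by field.
  rewrite (RInt_ext _ _ _ _ (fun y _ => Hsubst y)) in Hlin.
  rewrite (RInt_scal (V := R_CompleteNormedModule)) in Hlin
    by (apply (ex_RInt_continuous (V := R_CompleteNormedModule));
        intros; apply continuous_elliptic_m32, Hm).
  rewrite RInt_elliptic_m32 in Hlin by auto.
  rewrite <- (opp_RInt_swap (V := R_CompleteNormedModule) f) in Hlin by auto.
  change (scal ?a ?b) with (a * b) in Hlin. change (opp ?x) with (- x) in Hlin.
  change (RInt _ 0 PI) with (RInt f 0 PI).
  replace (RInt f 0 PI) with (2 * k * (E0 m / (1 - m))) by lra.
  unfold k, m. change (@eq _ ?a ?b) with (@eq R a b). field. repeat split; lra.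
Qed.

(** * The Henyey-Greenstein kernel *)

Lemma hg_cos_weight_pos g a : Rabs g < 1 -> 0 < 1 + g ^ 2 - 2 * g * cos a.
Proof. intros Hg. pose proof (hg_weight_pos g (cos a) Hg (COS_bound a)). lra. Qed.

Lemma continuous_legendre_sph_cos l mu th v :
  continuous (fun v => legendre l (sph_cos mu th v)) v.
Proof. apply continuous_comp; [apply continuous_sph_cos|apply continuous_legendre]. Qed.

Lemma continuous_hg_phase_sph_cos g mu th v : Rabs g < 1 ->
  continuous (fun v => hg_phase g (sph_cos mu th v)) v.
Proof.
  intros Hg. unfold hg_phase.
  apply (continuous_scal_r (V := R_NormedModule) ((1 - g ^ 2) / 2)
    (fun v => 1 / ((1 - 2 * g * sph_cos mu th v + g ^ 2)
                   * sqrt (1 - 2 * g * sph_cos mu th v + g ^ 2)))).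
  apply continuous_inv_mul_sqrt; [|apply hg_weight_pos, sph_cos_bound; exact Hg].
  apply (continuous_comp (sph_cos mu th) (fun c => 1 - 2 * g * c + g ^ 2));
    [apply continuous_sph_cos|].
  apply (ex_derive_continuous (V := R_NormedModule)). auto_derive. exact I.
Qed.

Lemma ex_series_legendre_weights g : Rabs g < 1 ->
  ex_series (fun l => (2 * INR l + 1) / 2 * Rabs g ^ l).
Proof.
  intros Hg.
  apply (ex_series_le (K := R_AbsRing) (V := R_CompleteNormedModule))
    with (fun l => INR (S l) * Rabs g ^ l); [|apply ex_series_succ_mul_pow, Hg].
  intro n. change (norm ?x) with (Rabs x). rewrite S_INR.
  pose proof (pos_INR n). assert (Hpow : 0 <= Rabs g ^ n) by (apply pow_le, Rabs_pos).
  rewrite Rabs_pos_eq; [nra|]. apply Rmult_le_pos; [lra|exact Hpow].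
Qed.

Lemma is_series_H_term_RInt g th mu : Rabs g < 1 -> 0 <= th <= PI ->
  is_series (H_term g (cos th) (cos mu))
    (/ PI * RInt (fun v => hg_phase g (sph_cos mu th v)) 0 PI).
Proof.
  intros Hg Hth. pose proof PI_RGT_0.
  set (u l v := (2 * INR l + 1) / 2 * g ^ l * legendre l (sph_cos mu th v)).
  assert (Hu : forall l, ex_RInt (u l) 0 PI).
  { intro l. apply (ex_RInt_continuous (V := R_CompleteNormedModule)). intros v _.
    apply (continuous_scal_r (V := R_NormedModule)), continuous_legendre_sph_cos. }
  assert (Hterm : forall l, H_term g (cos th) (cos mu) l = / PI * RInt (u l) 0 PI).
  { intro l. unfold u.
    rewrite (RInt_scal (V := R_CompleteNormedModule)
      (fun v => legendre l (sph_cos mu th v)) 0 PI).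
    - change (scal ?a ?b) with (a * b). rewrite RInt_legendre_sph_cos by exact Hth.
      unfold H_term. field. lra.
    - apply (ex_RInt_continuous (V := R_CompleteNormedModule)). intros v _.
      apply continuous_legendre_sph_cos. }
  assert (Hser : is_series (fun l => RInt (u l) 0 PI)
                           (RInt (fun v => hg_phase g (sph_cos mu th v)) 0 PI)).
  { apply (is_series_RInt u _ (fun l => (2 * INR l + 1) / 2 * Rabs g ^ l));
      [lra|exact Hu| | |apply ex_series_legendre_weights, Hg|].
    - apply (ex_RInt_continuous (V := R_CompleteNormedModule)). intros v _.
      apply continuous_hg_phase_sph_cos, Hg.
    - intros l v _. unfold u. rewrite !Rabs_mult, <- RPow_abs.
      pose proof (Rabs_legendre_le_1 l _ (sph_cos_bound mu th v)).
      pose proof (Rabs_pos (legendre l (sph_cos mu th v))).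
      pose proof (pos_INR l). assert (0 <= Rabs g ^ l) by (apply pow_le, Rabs_pos).
      rewrite (Rabs_pos_eq ((2 * INR l + 1) / 2)) by lra.
      assert (0 <= (2 * INR l + 1) / 2 * Rabs g ^ l) by (apply Rmult_le_pos; lra). nra.
    - intros v _. apply is_series_legendre_weighted; [apply sph_cos_bound|exact Hg]. }
  apply (is_series_scal_l (/ PI)) in Hser.
  eapply is_series_ext; [|exact Hser]. intro l. rewrite Hterm. reflexivity.
Qed.

Lemma RInt_hg_phase_sph_cos g mu th : Rabs g < 1 ->
  let up := 1 + g ^ 2 - 2 * g * cos (th + mu) in
  let um := 1 + g ^ 2 - 2 * g * cos (th - mu) in
  RInt (fun v => hg_phase g (sph_cos mu th v)) 0 PI
  = (1 - g ^ 2) / (um * sqrt up) * E0 ((up - um) / up).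
Proof.
  intros Hg up um.
  assert (Hup : 0 < up) by apply hg_cos_weight_pos, Hg.
  assert (Hum : 0 < um) by apply hg_cos_weight_pos, Hg.
  assert (0 < sqrt up) by (apply sqrt_lt_R0, Hup).
  set (A := 1 + g ^ 2 - 2 * g * (cos th * cos mu)).
  set (B := 2 * g * (sin th * sin mu)).
  assert (HA : A - B = um) by (unfold um, A, B; rewrite cos_minus; ring).
  assert (HB : A + B = up) by (unfold up, A, B; rewrite cos_plus; ring).
  rewrite (RInt_ext _
    (fun v => scal ((1 - g ^ 2) / 2) (1 / ((A - B * cos v) * sqrt (A - B * cos v))))).
  - rewrite (RInt_scal (V := R_CompleteNormedModule)), RInt_0_PI_cos_m32 by
      (lra || (apply (ex_RInt_continuous (V := R_CompleteNormedModule)); intros;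
               apply continuous_cos_m32; lra)).
    change (scal ?a ?b) with (a * b). rewrite HA, HB.
    replace ((up - um) / up) with (2 * B / up) by (rewrite <- HA, <- HB; field; lra).
    change (@eq _ ?a ?b) with (@eq R a b). field. lra.
  - intros v _. change (scal ?a ?b) with (a * b). unfold hg_phase.
    replace (1 - 2 * g * sph_cos mu th v + g ^ 2) with (A - B * cos v)
      by (unfold sph_cos, A, B; ring).
    reflexivity.
Qed.

Lemma is_series_H_term_cos g th mu : Rabs g < 1 -> 0 <= th <= PI ->
  let up := 1 + g ^ 2 - 2 * g * cos (th + mu) in
  let um := 1 + g ^ 2 - 2 * g * cos (th - mu) in
  is_series (H_term g (cos th) (cos mu))
    ((1 - g ^ 2) / (PI * um * sqrt up) * E0 ((up - um) / up)).
Proof.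
  intros Hg Hth up um. pose proof PI_RGT_0.
  assert (0 < um) by apply hg_cos_weight_pos, Hg.
  assert (0 < sqrt up) by apply sqrt_lt_R0, hg_cos_weight_pos, Hg.
  pose proof (is_series_H_term_RInt g th mu Hg Hth) as Hser.
  rewrite RInt_hg_phase_sph_cos in Hser by exact Hg.
  replace ((1 - g ^ 2) / (PI * um * sqrt up) * E0 ((up - um) / up))
    with (/ PI * ((1 - g ^ 2) / (um * sqrt up) * E0 ((up - um) / up)))
    by (field; repeat split; lra).
  exact Hser.
Qed.

Theorem mainTheorem1 :
  forall g : R, -1 < g < 1 ->
  (forall x y : R, -1 <= x <= 1 -> -1 <= y <= 1 ->
     let s := sqrt (1 - x ^ 2) * sqrt (1 - y ^ 2) in
     let wp := 1 + g ^ 2 - 2 * g * (x * y - s) in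
     let wm := 1 + g ^ 2 - 2 * g * (x * y + s) in
     0 < wp /\ 0 < wm /\
     is_series (H_term g x y)
       ((1 - g ^ 2) / (PI * wm * sqrt wp) * E0 (4 * g * s / wp))) /\
  (forall theta mu : R, 0 <= theta <= PI -> 0 <= mu <= PI ->
     let up := 1 + g ^ 2 - 2 * g * cos (theta + mu) in
     let um := 1 + g ^ 2 - 2 * g * cos (theta - mu) in
     is_series (H_term g (cos theta) (cos mu))
       ((1 - g ^ 2) / (PI * um * sqrt up) * E0 ((up - um) / up))).
Proof.
  intros g Hg. assert (Hg' : Rabs g < 1) by (apply Rabs_def1; lra).
  split; [|intros th mu Hth _; apply is_series_H_term_cos; assumption].
  intros x y Hx Hy s wp wm.
  assert (Hs : forall z, -1 <= z <= 1 -> sin (acos z) = sqrt (1 - z ^ 2))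
    by (intros z Hz; rewrite sin_acos by exact Hz; unfold Rsqr; f_equal; ring).
  assert (Hp : wp = 1 + g ^ 2 - 2 * g * cos (acos x + acos y))
    by (unfold wp, s; rewrite cos_plus, !cos_acos, !Hs by assumption; ring).
  assert (Hm : wm = 1 + g ^ 2 - 2 * g * cos (acos x - acos y))
    by (unfold wm, s; rewrite cos_minus, !cos_acos, !Hs by assumption; ring).
  assert (0 < wp) by (rewrite Hp; apply hg_cos_weight_pos, Hg').
  assert (0 < wm) by (rewrite Hm; apply hg_cos_weight_pos, Hg').
  split; [assumption|split; [assumption|]].
  replace (4 * g * s / wp) with ((wp - wm) / wp) by (unfold wp, wm; field; fold wp; lra).
  pose proof (is_series_H_term_cos g (acos x) (acos y) Hg' (acos_bound x)) as Hser.
  rewrite !cos_acos in Hser by assumption.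
  rewrite Hp, Hm. exact Hser.
Qed.
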